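(* Let $\rho=(a^b)$ be a partition of $n=ab$ with $a,b\ge 2$, and put $\alpha(\rho)=(a+1,a^{\,b-2},a-1)$ and $\beta(\rho)=(a^{\,b-1},a-1,1)$. Then: (1) $\deg_{G_n}(\rho)=2$; (2) the neighbors of $\rho$ in $G_n$ are exactly $\alpha(\rho)$ and $\beta(\rho)$; (3) $\rho,\alpha(\rho),\beta(\rho)$ form a triangle in $G_n$; (4) this triangle is the unique maximal clique of $G_n$ containing $\rho$; (5) consequently $\rho\in D_2(n)\cap L_2(n)$.
   Context: The partition graph $G_n$ has as vertices the integer partitions of $n$; two partitions are adjacent if one is obtained from the other by a single elementary unit transfer followed by reordering: decrease one part by $1$ and either increase a different part by $1$ or create a new part equal to $1$, then delete a part that became $0$ and sort in nonincreasing order (the result being different from the original). Exponent notation $a^k$ denotes $k$ parts equal to $a$; when $b=2$, $\alpha(\rho)=(a+1,a-1)$. $D_d(n)$ is the set of vertices of $G_n$ of degree $d$. The local simplex dimension of a vertex $v$ is $m-1$, where $m$ is the largest size of a clique of $G_n$ containing $v$ (i.e. the largest dimension of a simplex containing $v$ in the clique complex of $G_n$); $L_r(n)$ is the set of vertices of local simplex dimension $r$. *)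

From mathcomp Require Import all_boot.
Set Implicit Arguments. Unset Strict Implicit. Unset Printing Implicit Defensive.

Definition is_partition (n : nat) (p : seq nat) : bool :=
  [&& sorted geq p, all (fun x => 0 < x) p & sumn p == n].

Definition normalize (s : seq nat) : seq nat :=
  sort geq (filter (fun x => 0 < x) s).

(* Elementary unit transfer: decrease part i by 1 and increase part j != i
   by 1; j = size p means "create a new part equal to 1" (incr_nth pads). *)
Definition transfer (p : seq nat) (i j : nat) : seq nat :=
  normalize (incr_nth (set_nth 0 p i (nth 0 p i).-1) j).

Definition step (p q : seq nat) : Prop :=
  exists i j, [/\ i < size p, j <= size p, i != j, q = transfer p i j & q != p].

Definition adj (n : nat) (p q : seq nat) : Prop :=
  [/\ is_partition n p, is_partition n q & (step p q \/ step q p)].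

Definition has_degree (n : nat) (p : seq nat) (d : nat) : Prop :=
  exists s : seq (seq nat),
    [/\ uniq s, (forall q, q \in s <-> adj n p q) & size s = d].

Definition in_D (n d : nat) (p : seq nat) : Prop :=
  is_partition n p /\ has_degree n p d.

Definition clique (n : nat) (K : seq (seq nat)) : Prop :=
  [/\ uniq K, (forall x, x \in K -> is_partition n x) &
      (forall x y, x \in K -> y \in K -> x != y -> adj n x y)].

Definition maximal_clique (n : nat) (K : seq (seq nat)) : Prop :=
  clique n K /\
  (forall K', clique n K' -> {subset K <= K'} -> {subset K' <= K}).

Definition local_simplex_dim (n : nat) (p : seq nat) (r : nat) : Prop :=
  (exists K, [/\ clique n K, p \in K & size K = r.+1]) /\
  (forall K, clique n K -> p \in K -> size K <= r.+1).

Definition in_L (n r : nat) (p : seq nat) : Prop :=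
  is_partition n p /\ local_simplex_dim n p r.

Definition rho_part (a b : nat) : seq nat := nseq b a.
Definition alpha_part (a b : nat) : seq nat := a.+1 :: nseq (b - 2) a ++ [:: a - 1].
Definition beta_part (a b : nat) : seq nat := nseq (b - 1) a ++ [:: a - 1; 1].

(* Every part of rho = (a^b) equals a, so moving a unit from one part to another always
   gives alpha = (a+1, a^(b-2), a-1), and moving it to a new part gives
   beta = (a^(b-1), a-1, 1).  Conversely, tracking the multiplicities of the parts
   (a sorted partition is determined by the counts [count P] for all P) shows that alpha
   and beta are the only partitions from which a single transfer reaches rho.  As alpha
   and beta are adjacent themselves (move the unit from a+1 to a new part), the
   neighbourhood of rho is one edge; such a vertex has degree 2 and lies in exactly one
   maximal clique, the triangle it spans. *)

From mathcomp Require Import all_boot zify.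

Set Implicit Arguments. Unset Strict Implicit. Unset Printing Implicit Defensive.

Lemma count_incr_nth (P : pred nat) s j : j < size s ->
  count P (incr_nth s j) + P (nth 0 s j) = count P s + P (nth 0 s j).+1.
Proof.
elim: s j => [|x s IH] [|j] //= j_lt; first lia.
have := IH j j_lt; lia.
Qed.

Lemma incr_nth_size s : incr_nth s (size s) = rcons s 1.
Proof. by elim: s => //= x s ->. Qed.

Lemma leq_count_mem (T : eqType) (P : pred T) s x : x \in s -> P x <= count P s.
Proof. by rewrite -sub1seq => /(leq_count_subseq P); rewrite /= addn0. Qed.

Section CountTransfer.
Variables (P : pred nat) (p : seq nat) (i : nat).
Hypotheses (p_gt0 : all (fun x => 0 < x) p) (i_lt : i < size p).

Let pos_P := predI P (fun x => 0 < x).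
Let x := nth 0 p i.
Let dec_p := set_nth 0 p i x.-1.

Let count_transfer_dec :
  count pos_P dec_p + P x = count P p + (P x.-1 && (1 < x)).
Proof.
have x_gt0 : 0 < x by apply: (allP p_gt0); apply: mem_nth.
have count_pos : count pos_P p = count P p.
  by apply: eq_in_count => z /(allP p_gt0) z_gt0; rewrite /= z_gt0 andbT.
have := leq_count_mem pos_P (mem_nth 0 i_lt); rewrite count_set_nth_ltn // count_pos.
by rewrite /= -/x x_gt0 -ltn_predRL andbT; lia.
Qed.

Lemma count_transfer j : j < size p -> i != j ->
  let y := nth 0 p j in
  count P (transfer p i j) + P x + P y = count P p + (P x.-1 && (1 < x)) + P y.+1.
Proof.
move=> j_lt ij /=; set y := nth 0 p j.
have y_gt0 : 0 < y by apply: (allP p_gt0); apply: mem_nth.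
have size_dec : size dec_p = size p by rewrite size_set_nth; lia.
have nth_dec : nth 0 dec_p j = y by rewrite nth_set_nth /= eq_sym (negbTE ij).
rewrite -size_dec in j_lt; have := count_incr_nth pos_P j_lt.
rewrite nth_dec /= ltn0Sn andbT.
rewrite /transfer /normalize count_sort count_filter -/x -/dec_p -/pos_P.
have := count_transfer_dec; lia.
Qed.

Lemma count_transfer_new :
  count P (transfer p i (size p)) + P x = count P p + (P x.-1 && (1 < x)) + P 1.
Proof.
have size_dec : size dec_p = size p by rewrite size_set_nth; lia.
rewrite /transfer /normalize count_sort count_filter -/x -/dec_p -/pos_P.
rewrite -size_dec incr_nth_size -cats1 count_cat.
have := count_transfer_dec; rewrite /=; lia.
Qed.
End CountTransfer.

Lemma sorted_transfer p i j : sorted geq (transfer p i j).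
Proof. by apply: sort_sorted => x y; exact: leq_total. Qed.

Lemma sorted_geq_count_eq s t : sorted geq s -> sorted geq t ->
  (forall P : pred nat, count P s = count P t) -> s = t.
Proof.
move=> s_sorted t_sorted /permP; apply: (@sorted_eq _ geq) => //.
- by move=> y x z yx zy; apply: leq_trans zy yx.
- by move=> x y; rewrite andbC; exact: anti_leq.
Qed.

Lemma path_geq_nseq_cat x k c t :
  c <= x -> path geq c t -> path geq x (nseq k c ++ t).
Proof.
elim: k x => [|k IH] x cx ct /=; last by rewrite cx; apply: IH.
by case: t ct => //= y t /andP [yc ->]; rewrite andbT (leq_trans yc cx).
Qed.

Lemma partition_sorted n p : is_partition n p -> sorted geq p.
Proof. by case/and3P. Qed.

Lemma partition_gt0 n p : is_partition n p -> all (fun x => 0 < x) p.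
Proof. by case/and3P. Qed.

Section PartitionGraph.
Variable n : nat.

Lemma adj_sym p q : adj n p q -> adj n q p.
Proof. by case=> p_part q_part [pq|qp]; split => //; [right|left]. Qed.

Lemma adj_neq p q : adj n p q -> p != q.
Proof.
by case=> _ _ [[i [j [_ _ _ _ qp]]]|[i [j [_ _ _ _ pq]]]]; rewrite // eq_sym.
Qed.

Section EdgeNeighbourhood.
Variables p x y : seq nat.
Hypothesis adj_p : forall q, adj n p q <-> q = x \/ q = y.
Hypothesis adj_xy : adj n x y.

Let adj_px : adj n p x. Proof. by apply/adj_p; left. Qed.
Let adj_py : adj n p y. Proof. by apply/adj_p; right. Qed.

Lemma uniq_triangle : uniq [:: p; x; y].
Proof. by rewrite /= !inE negb_or !adj_neq. Qed.

Lemma has_degree_edge_nbhd : has_degree n p 2.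
Proof.
exists [:: x; y]; split=> // [|q]; first by rewrite /= inE adj_neq.
by rewrite adj_p !inE; split => [/orP [] /eqP|[] ->]; rewrite ?eqxx ?orbT; auto.
Qed.

Lemma clique_triangle : clique n [:: p; x; y].
Proof.
have [p_part x_part _] := adj_px; have [_ y_part _] := adj_py.
split; first exact: uniq_triangle.
  by move=> z; rewrite !inE => /or3P [] /eqP ->.
move=> u v; rewrite !inE => /or3P [] /eqP -> /or3P [] /eqP ->; rewrite ?eqxx // => _.
all: by [|apply: adj_sym].
Qed.

Lemma sub_clique_triangle K : clique n K -> p \in K -> {subset K <= [:: p; x; y]}.
Proof.
case=> _ _ K_adj pK z zK.
have [<-|pz] := eqVneq p z; first exact: mem_head.
by case/adj_p: (K_adj _ _ pK zK pz) => ->; rewrite !inE eqxx ?orbT.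
Qed.

Lemma maximal_clique_triangle : maximal_clique n [:: p; x; y].
Proof.
split=> [|K K_clique sub_K]; first exact: clique_triangle.
by apply: sub_clique_triangle => //; apply: sub_K; exact: mem_head.
Qed.

Lemma perm_maximal_clique_triangle K :
  maximal_clique n K -> p \in K -> perm_eq K [:: p; x; y].
Proof.
move=> [[K_uniq K_part K_adj] K_max] pK.
have sub_K := sub_clique_triangle (And3 K_uniq K_part K_adj) pK.
apply: uniq_perm => //; first exact: uniq_triangle.
move=> z; apply/idP/idP => [/sub_K //|]; apply: K_max => //.
exact: clique_triangle.
Qed.

Lemma local_simplex_dim_edge_nbhd : local_simplex_dim n p 2.
Proof.
split=> [|K K_clique pK].
  by exists [:: p; x; y]; rewrite mem_head; split; first exact: clique_triangle.
have /uniq_leq_size -> // := sub_clique_triangle K_clique pK.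
by case: K_clique.
Qed.

End EdgeNeighbourhood.
End PartitionGraph.

Section EqualParts.
Variables a b : nat.
Hypotheses (a_ge2 : 2 <= a) (b_ge2 : 2 <= b).

Local Notation rho := (rho_part a b).
Local Notation alpha := (alpha_part a b).
Local Notation beta := (beta_part a b).

Lemma count_rho P : count P rho = P a * b.
Proof. exact: count_nseq. Qed.

Lemma count_alpha P : count P alpha = P a.+1 + P a * (b - 2) + P (a - 1).
Proof. by rewrite /= count_cat count_nseq /= addn0 addnA. Qed.

Lemma count_beta P : count P beta = P a * (b - 1) + P (a - 1) + P 1.
Proof. by rewrite count_cat count_nseq /= addn0 addnA. Qed.

Lemma betaE : beta = a :: nseq (b - 2) a ++ [:: a - 1; 1].
Proof. by rewrite /beta_part (_ : b - 1 = (b - 2).+1) //; lia. Qed.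

Lemma partition_rho : is_partition (a * b) rho.
Proof.
apply/and3P; split; last by rewrite sumn_nseq mulnC.
  by case: b b_ge2 => // k _; rewrite /rho_part /= -[nseq k a]cats0 path_geq_nseq_cat.
by rewrite all_nseq; lia.
Qed.

Lemma partition_alpha : is_partition (a * b) alpha.
Proof.
apply/and3P; split.
- by rewrite /= path_geq_nseq_cat //= andbT; lia.
- by rewrite /= all_cat all_nseq /= andbT; lia.
- by rewrite /= sumn_cat sumn_nseq /=; apply/eqP; nia.
Qed.

Lemma partition_beta : is_partition (a * b) beta.
Proof.
rewrite betaE; apply/and3P; split.
- by rewrite /= path_geq_nseq_cat //= andbT; lia.
- by rewrite /= all_cat all_nseq /= andbT; lia.
- by rewrite /= sumn_cat sumn_nseq /=; apply/eqP; nia.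
Qed.

Let rho_gt0 : all (fun x => 0 < x) rho := partition_gt0 partition_rho.

Let size_rho : size rho = b.
Proof. exact: size_nseq. Qed.

Lemma transfer_rho i j : i < b -> j < b -> i != j -> transfer rho i j = alpha.
Proof.
move=> i_lt j_lt ij; rewrite -size_rho in i_lt j_lt.
apply: sorted_geq_count_eq => [||P]; first exact: sorted_transfer.
  exact: partition_sorted partition_alpha.
have := count_transfer P rho_gt0 i_lt j_lt ij.
rewrite size_rho in i_lt j_lt.
rewrite count_rho count_alpha /= !nth_nseq i_lt j_lt -subn1 a_ge2 andbT.
by case: (P a) => /=; lia.
Qed.

Lemma transfer_rho_new i : i < b -> transfer rho i b = beta.
Proof.
move=> i_lt; rewrite -size_rho in i_lt; rewrite -[X in transfer _ _ X]size_rho.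
apply: sorted_geq_count_eq => [||P]; first exact: sorted_transfer.
  exact: partition_sorted partition_beta.
have := count_transfer_new P rho_gt0 i_lt.
rewrite size_rho in i_lt.
rewrite count_rho count_beta /= !nth_nseq i_lt -subn1 a_ge2 andbT.
by case: (P a) => /=; lia.
Qed.

Lemma transfer_alpha_new : transfer alpha 0 (size alpha) = beta.
Proof.
apply: sorted_geq_count_eq => [||P]; first exact: sorted_transfer.
  exact: partition_sorted partition_beta.
have := count_transfer_new P (partition_gt0 partition_alpha) (ltn0Sn _).
rewrite count_alpha count_beta /= ltnS (ltnW a_ge2) andbT.
by case: (P a) => /=; lia.
Qed.

Lemma count_transfer_rho_inv q x y : sorted geq q -> x \in q -> 0 < x -> q != rho ->
  (forall P, count P q + (P x.-1 && (1 < x)) + P y.+1 = P a * b + P x + P y) ->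
  q = alpha \/ q = beta.
Proof.
move=> q_sorted x_in x_gt0 q_neq count_q.
have count_x (P : pred nat) : P x <= count P q := leq_count_mem P x_in.
have yS_eq : y.+1 = a.
  have := count_q (pred1 y.+1); rewrite /= eqxx.
  have [//|a_ne] := eqVneq a y.+1.
  have [x_eq|x_ne] := eqVneq x y.+1; last lia.
  by have := count_x (pred1 y.+1); rewrite x_eq /=; lia.
rewrite yS_eq (_ : y = a - 1) in count_q; last lia.
have x_cases : [\/ x = a.+1, x = 1 | x = a].
  have [|x_ne1] := eqVneq x 1; first by constructor 2.
  have [|x_ne] := eqVneq x a.+1; first by constructor 1.
  have a_ne : (a == x.-1) = false by apply/eqP; lia.
  by constructor 3; have := count_q (pred1 x.-1); rewrite /= eqxx a_ne; lia.
case: x_cases => x_eq; rewrite x_eq in count_q.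
- left; apply: sorted_geq_count_eq => // [|P]; first exact: partition_sorted partition_alpha.
  by have := count_q P; rewrite count_alpha /=; case: (P a) => /=; lia.
- right; apply: sorted_geq_count_eq => // [|P]; first exact: partition_sorted partition_beta.
  by have := count_q P; rewrite count_beta /=; case: (P a) => /=; lia.
- case/eqP: q_neq; apply: sorted_geq_count_eq => // [|P].
    exact: partition_sorted partition_rho.
  by have := count_q P; rewrite count_rho subn1 a_ge2 andbT; lia.
Qed.

Lemma transfer_eq_rho q i j : is_partition (a * b) q ->
  i < size q -> j <= size q -> i != j -> transfer q i j = rho -> q != rho ->
  q = alpha \/ q = beta.
Proof.
move=> q_part i_lt j_le ij q_rho q_neq.
have q_gt0 := partition_gt0 q_part.
have x_in := mem_nth 0 i_lt.
have j_lt : j < size q.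
  (* a new part 1 cannot occur in rho, as a >= 2 *)
  rewrite ltn_neqAle j_le andbT; apply/eqP => j_eq.
  have := count_transfer_new (pred1 1) q_gt0 i_lt.
  have := leq_count_mem (pred1 1) x_in.
  have a_ne1 : (a == 1) = false by apply/eqP; lia.
  by rewrite -j_eq q_rho count_rho /= a_ne1; lia.
apply: (count_transfer_rho_inv (y := nth 0 q j) _ x_in) => //.
- exact: partition_sorted q_part.
- exact: (allP q_gt0).
- by move=> P; have := count_transfer P q_gt0 i_lt j_lt ij; rewrite q_rho count_rho.
Qed.

Lemma adj_rho q : adj (a * b) rho q <-> q = alpha \/ q = beta.
Proof.
split=> [[_ q_part [[i [j [i_lt j_le ij -> _]]]|[i [j [i_lt j_le ij q_rho q_neq]]]]]|].
- rewrite size_rho in i_lt j_le.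
  have [j_lt|->] : j < b \/ j = b by lia.
    by left; apply: transfer_rho.
  by right; apply: transfer_rho_new.
- by apply: transfer_eq_rho q_part i_lt j_le ij (esym q_rho) _; rewrite eq_sym.
- case=> ->; (split; first exact: partition_rho);
    [exact: partition_alpha|left|exact: partition_beta|left].
  + have transfer_01 : transfer rho 0 1 = alpha by apply: transfer_rho; lia.
    exists 0, 1; rewrite size_rho transfer_01; split=> //; try lia.
    apply/eqP => /(congr1 (count (pred1 a.+1))); rewrite count_alpha count_rho /=; lia.
  + have transfer_0b : transfer rho 0 b = beta by apply: transfer_rho_new; lia.
    exists 0, b; rewrite size_rho transfer_0b; split=> //; try lia.
    apply/eqP => /(congr1 (count (pred1 1))); rewrite count_beta count_rho /=; lia.
Qed.

Lemma adj_alpha_beta : adj (a * b) alpha beta.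
Proof.
split; [exact: partition_alpha|exact: partition_beta|left].
exists 0, (size alpha); rewrite transfer_alpha_new; split=> //.
apply/eqP => /(congr1 (count (pred1 1))); rewrite count_beta count_alpha /=; lia.
Qed.

End EqualParts.

Unset Implicit Arguments.

Theorem proposition3p3 (a b : nat) : 2 <= a -> 2 <= b ->
  let n := a * b in
  let rho := rho_part a b in
  let alpha := alpha_part a b in
  let beta := beta_part a b in
  [/\ has_degree n rho 2,
      (forall q, adj n rho q <-> q = alpha \/ q = beta),
      clique n [:: rho; alpha; beta],
      maximal_clique n [:: rho; alpha; beta] /\
        (forall K, maximal_clique n K -> rho \in K ->
           perm_eq K [:: rho; alpha; beta])
    & in_D n 2 rho /\ in_L n 2 rho].
Proof.
move=> a_ge2 b_ge2 /=.
have nbhd_rho := adj_rho a_ge2 b_ge2.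
have nbhd_edge := adj_alpha_beta a_ge2 b_ge2.
have part_rho := partition_rho a_ge2 b_ge2.
have degree_rho := has_degree_edge_nbhd nbhd_rho nbhd_edge.
split=> //.
- exact: clique_triangle nbhd_rho nbhd_edge.
- split; first exact: maximal_clique_triangle nbhd_rho nbhd_edge.
  by move=> K; apply: perm_maximal_clique_triangle nbhd_rho nbhd_edge K.
- by split; split=> //; apply: local_simplex_dim_edge_nbhd nbhd_rho nbhd_edge.
Qed.
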